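(* Let $M$ be a matroid on a finite set $E$, with dual $M^*$, and let $\mathcal{C}$ be a family of subsets of $E$. Then $\mathcal{C}$ is a modular cyclic family in $M$ if and only if $\{E\setminus C: C\in\mathcal{C}\}$ is a modular cut in $M^*$.
   Context: A set $X\subseteq E$ is cyclic in $M$ if it is a union of circuits; $\emptyset$ counts as cyclic. A pair $X,Y$ is modular in $M$ if $r(X)+r(Y)=r(X\cap Y)+r(X\cup Y)$. The cyclic sets form a lattice with join $C_1\cup C_2$ and meet $\mathrm{cyc}(C_1\cap C_2)$. Here $\mathrm{cyc}(X)$ is the largest cyclic subset of $X$, obtained by removing the coloops of $M|_X$. A modular cyclic family is a family of cyclic sets that is down-closed in this lattice and contains $X\cup Y$ for every modular pair $X,Y$ of its members. A modular cut of a matroid is a family of flats that is up-closed in the lattice of flats and contains $X\cap Y$ for every modular pair $X,Y$ of its members. *)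

From mathcomp Require Import all_boot.
Set Implicit Arguments. Unset Strict Implicit. Unset Printing Implicit Defensive.

(* A matroid on the finite ground set E = [set: T], given by its rank function. *)
Definition matroid_rank (T : finType) (r : {set T} -> nat) : Prop :=
  [/\ (forall X : {set T}, r X <= #|X|),
      (forall X Y : {set T}, X \subset Y -> r X <= r Y) &
      (forall X Y : {set T}, r (X :|: Y) + r (X :&: Y) <= r X + r Y)].

Section Matroid.
Variables (T : finType) (r : {set T} -> nat).

Definition dual_rank (X : {set T}) : nat := #|X| + r (~: X) - r setT.

Definition indep (X : {set T}) : bool := r X == #|X|.

Definition circuit (C : {set T}) : Prop :=
  ~~ indep C /\ forall D : {set T}, D \proper C -> indep D.

Definition cyclic (X : {set T}) : Prop :=
  exists Cs : {set {set T}},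
    (forall C, C \in Cs -> circuit C) /\ X = \bigcup_(C in Cs) C.

Definition closure (X : {set T}) : {set T} := [set e | r (e |: X) == r X].

Definition flat (X : {set T}) : Prop := closure X = X.

Definition modular_pair (X Y : {set T}) : Prop :=
  r X + r Y = r (X :&: Y) + r (X :|: Y).

Definition modular_cyclic_family (F : {set {set T}}) : Prop :=
  [/\ (forall X, X \in F -> cyclic X),
      (forall X Y, X \in F -> cyclic Y -> Y \subset X -> Y \in F) &
      (forall X Y, X \in F -> Y \in F -> modular_pair X Y -> X :|: Y \in F)].

Definition modular_cut (F : {set {set T}}) : Prop :=
  [/\ (forall X, X \in F -> flat X),
      (forall X Y, X \in F -> flat Y -> X \subset Y -> Y \in F) &
      (forall X Y, X \in F -> Y \in F -> modular_pair X Y -> X :&: Y \in F)].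

End Matroid.

From Pilot Require Import Defs.
From mathcomp Require Import all_boot.
From mathcomp Require Import zify.

Set Implicit Arguments. Unset Strict Implicit. Unset Printing Implicit Defensive.

(* Complementation is an inclusion-reversing bijection on subsets of E that
   turns unions into intersections.  It maps the cyclic sets of M exactly onto
   the flats of M^*: a set Y is cyclic iff no e in Y is a coloop of M|Y, i.e.
   r(Y - e) = r(Y), and since r^*(X) = |X| + r(E - X) - r(E), adding e in Y to
   E - Y raises r^* by 1 - (r(Y) - r(Y - e)), so this says that E - Y is closed
   in M^*.  Moreover r^* differs from r(E - .) by the modular function
   |.| - r(E), so (X, Y) is modular in M iff (E - X, E - Y) is modular in M^*. *)

Section RankFunction.
Variables (T : finType) (r : {set T} -> nat).
Hypothesis rank_r : matroid_rank r.
Implicit Types (X Y C D : {set T}) (e f : T).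

Lemma rank_le_card X : r X <= #|X|.
Proof. by case: rank_r. Qed.

Lemma rank_subset X Y : X \subset Y -> r X <= r Y.
Proof. by case: rank_r => _ + _; apply. Qed.

Lemma rank_submod X Y : r (X :|: Y) + r (X :&: Y) <= r X + r Y.
Proof. by case: rank_r. Qed.

Lemma rank0 : r set0 = 0.
Proof. by have := rank_le_card set0; rewrite cards0; lia. Qed.

Lemma rankU1_le e X : r (e |: X) <= r X + 1.
Proof.
have := rank_submod [set e] X; have := rank_le_card [set e].
by rewrite cards1; lia.
Qed.

Lemma rankD1_le e X : r X <= r (X :\ e) + 1.
Proof.
apply: leq_trans (rankU1_le e _); apply: rank_subset.
by apply/subsetP => x; rewrite !inE; case: eqVneq.
Qed.

Lemma rankD1_subset e X : r (X :\ e) <= r X.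
Proof. exact/rank_subset/subD1set. Qed.

(* Submodularity in its diminishing-returns form. *)
Lemma rankD1_marginal f X Y :
  f \in X -> X \subset Y -> r Y + r (X :\ f) <= r X + r (Y :\ f).
Proof.
move=> fX XY; have := rank_submod X (Y :\ f).
have -> : X :|: (Y :\ f) = Y.
  apply/setP => x; rewrite !inE; case: eqVneq => [->|_] /=.
    by rewrite fX (subsetP XY).
  by case: (boolP (x \in X)) => [/(subsetP XY)->|].
suff -> : X :&: (Y :\ f) = X :\ f by [].
by apply/setP => x; rewrite !inE andbCA; case: (boolP (x \in X)) => // /(subsetP XY)->.
Qed.

Lemma indep_coloops X : {in X, forall f, r (X :\ f) < r X} -> indep r X.
Proof.
move=> coloopX; apply/eqP.
suff: forall n Y, #|Y| = n -> Y \subset X -> r Y = #|Y| by apply.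
elim=> [|n IH] Y cardY YX; first by rewrite (cards0_eq cardY) rank0 cards0.
have [f fY] : exists f, f \in Y by apply/card_gt0P; rewrite cardY.
have coloop_f : r (Y :\ f) < r Y.
  have := rankD1_marginal fY YX; have := coloopX f (subsetP YX f fY); lia.
have cardYf : #|Y :\ f| = n by move: cardY; rewrite (cardsD1 f) fY; lia.
have := IH _ cardYf (subset_trans (subD1set Y f) YX).
have := rankD1_le f Y; have := rank_le_card Y; lia.
Qed.

Lemma indep_subset X Y : Y \subset X -> indep r X -> indep r Y.
Proof.
move=> YX /eqP indX; apply: indep_coloops => f fY.
have := rankD1_marginal fY YX; have := rank_le_card (X :\ f).
by rewrite [#|X|](cardsD1 f) (subsetP YX f fY) in indX; lia.
Qed.

Lemma circuit_rankD1 C e : circuit r C -> e \in C -> r (C :\ e) = r C.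
Proof.
move=> [/eqP depC indepC] eC; have /eqP := indepC _ (properD1 eC).
have := rank_le_card C; have := rankD1_subset e C.
by rewrite [#|C|](cardsD1 e) eC in depC *; lia.
Qed.

(* A minimal D with e in D and r(D - e) = r(D) is a circuit. *)
Lemma exists_circuit e Y : e \in Y -> r (Y :\ e) = r Y ->
  exists C, [/\ circuit r C, e \in C & C \subset Y].
Proof.
move=> eY rYe.
pose P := [pred D : {set T} | [&& e \in D, D \subset Y & r (D :\ e) == r D]].
have PY : P Y by rewrite /= eY subxx rYe eqxx.
have [D /minsetP [/and3P [eD DY /eqP rDe] minD] _] := minset_exists PY.
have coloopDf f : f \in D -> f != e -> r (D :\ f :\ e) < r (D :\ f).
  move=> fD fe; rewrite ltn_neqAle rankD1_subset andbT; apply: contraTneq fD => rDfe.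
  have /minD/(_ (subD1set D f))/setP/(_ f) : P (D :\ f).
    by rewrite /= !inE eq_sym fe eD rDfe eqxx (subset_trans (subD1set D f) DY).
  by rewrite !inE eqxx => <-.
have DfeC f : D :\ f :\ e = D :\ e :\ f.
  by apply/setP => x; rewrite !inE andbCA.
have indep_De : indep r (D :\ e).
  apply: indep_coloops => f; rewrite !inE => /andP [fe fD].
  have := coloopDf f fD fe; have := rankD1_subset f D; rewrite DfeC; lia.
exists D; split=> //; split.
  move: indep_De; rewrite /indep [#|D|](cardsD1 e) eD => /eqP.
  by rewrite rDe => ->; lia.
move=> D' /properP [D'D [x xD x'D']].
apply: indep_subset (_ : D' \subset D :\ x) _; first by rewrite subsetD1 D'D x'D'.
have [-> // | xe] := eqVneq x e.
have /eqP := indep_subset (subD1set (D :\ e) x) indep_De; rewrite -DfeC.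
have := coloopDf x xD xe; have := rank_le_card (D :\ x).
by rewrite /indep [#|D :\ x|](cardsD1 e) !inE eq_sym xe eD; lia.
Qed.

Definition circuitb C : bool :=
  ~~ indep r C && [forall D : {set T}, (D \proper C) ==> indep r D].

Lemma circuitP C : reflect (circuit r C) (circuitb C).
Proof.
apply: (iffP andP) => [[depC /forallP indepC] | [depC indepC]]; split=> //.
  by move=> D /(implyP (indepC D)).
by apply/forallP => D; apply/implyP => /indepC.
Qed.

Lemma cyclicP Y : cyclic r Y <-> {in Y, forall e, r (Y :\ e) = r Y}.
Proof.
split=> [[Cs [circuitCs defY]] e | noloops].
  rewrite {1}defY => /bigcupP [C CCs eC].
  have CY : C \subset Y by rewrite defY; exact: bigcup_sup.
  apply/eqP; rewrite eqn_leq rankD1_subset /=.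
  have := rankD1_marginal eC CY.
  by rewrite (circuit_rankD1 (circuitCs C CCs) eC); lia.
exists [set C : {set T} | (C \subset Y) && circuitb C]; split.
  by move=> C; rewrite inE => /andP [_ /circuitP].
apply/eqP; rewrite eqEsubset; apply/andP; split; last first.
  by apply/bigcupsP => C; rewrite inE => /andP [].
apply/subsetP => e eY; have [C [circC eC CY]] := exists_circuit eY (noloops e eY).
by apply/bigcupP; exists C; rewrite // inE CY; apply/circuitP.
Qed.

Lemma rank_setT_le X : r setT <= #|X| + r (~: X).
Proof.
have := rank_submod X (~: X); rewrite setUCr setICr rank0.
by have := rank_le_card X; lia.
Qed.

Lemma mem_dual_closureC e Y : e \in Y ->
  (e \in Defs.closure (dual_rank r) (~: Y)) = (r (Y :\ e) < r Y).
Proof.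
move=> eY; rewrite inE; have -> : e |: ~: Y = ~: (Y :\ e).
  by apply/setP => x; rewrite !inE; case: eqVneq => [->|].
have cardC : #|~: (Y :\ e)| = #|~: Y| + 1.
  have := cardsC Y; have := cardsC (Y :\ e); rewrite [#|Y|](cardsD1 e) eY; lia.
have := rank_setT_le (~: Y); have := rank_setT_le (~: (Y :\ e)).
rewrite /dual_rank !setCK cardC; have := rankD1_subset e Y; have := rankD1_le e Y.
by move=> *; apply/eqP/idP => ?; lia.
Qed.

Lemma cyclic_flatC Y : cyclic r Y <-> flat (dual_rank r) (~: Y).
Proof.
rewrite cyclicP; split=> [noloops | /setP flatY e eY].
  apply/setP => x; case: (boolP (x \in Y)) => xY.
    by rewrite mem_dual_closureC // noloops // ltnn inE xY.
  by rewrite !inE xY (setUidPr _) ?eqxx // sub1set inE.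
have := flatY e; rewrite mem_dual_closureC // !inE eY => /negbT.
by rewrite -leqNgt => YeY; apply/eqP; rewrite eqn_leq YeY rankD1_subset.
Qed.

Lemma modular_pair_dualC X Y :
  modular_pair (dual_rank r) (~: X) (~: Y) <-> modular_pair r X Y.
Proof.
rewrite /modular_pair -setCU -setCI /dual_rank !setCK.
have := cardsUI (~: X) (~: Y); rewrite -setCU -setCI.
have := rank_setT_le (~: X); have := rank_setT_le (~: Y).
have := rank_setT_le (~: (X :|: Y)); have := rank_setT_le (~: (X :&: Y)).
by rewrite !setCK => *; split=> ?; lia.
Qed.

End RankFunction.

Lemma mem_imset_setC (T : finType) (F : {set {set T}}) X :
  (X \in [set ~: C | C in F]) = (~: X \in F).
Proof. by rewrite -{1}[X]setCK mem_imset //; apply: setC_inj. Qed.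

Theorem proposition2p1 (T : finType) (r : {set T} -> nat) (F : {set {set T}}) :
  matroid_rank r ->
  (modular_cyclic_family r F <->
   modular_cut (dual_rank r) [set ~: C | C in F]).
Proof.
move=> rank_r; split=> [[cycF downF unionF] | [flatF upF meetF]]; split.
- by move=> X; rewrite mem_imset_setC => /cycF; rewrite (cyclic_flatC rank_r) setCK.
- move=> X Y; rewrite !mem_imset_setC -setCS => XF flatY YX.
  by apply: downF YX; rewrite // (cyclic_flatC rank_r) setCK.
- move=> X Y; rewrite !mem_imset_setC -[X]setCK -[Y]setCK.
  rewrite (modular_pair_dualC rank_r) !setCK setCI => XF YF; exact: unionF.
- by move=> X XF; apply/(cyclic_flatC rank_r)/flatF; rewrite mem_imset_setC setCK.
- move=> X Y XF cycY YX; have := upF (~: X) (~: Y).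
  by rewrite !mem_imset_setC !setCK setCS -(cyclic_flatC rank_r); apply.
- move=> X Y XF YF modXY; have := meetF (~: X) (~: Y).
  by rewrite !mem_imset_setC !setCK (modular_pair_dualC rank_r) -setCU setCK; apply.
Qed.
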